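(* Let $\mathrm{k}$ be an infinite field. For every integer $n\geq4$ and every non-constant polynomial $P\in\mathrm{k}[T]$, the $\mathrm{k}$-algebra $\mathrm{k}[T]/(P^n)$ has infinitely many subalgebras.
   Context: Subalgebras are unital (contain $1$). *)

From HB Require Import structures.
From mathcomp Require Import all_boot all_order all_algebra.
From mathcomp Require Import boolp classical_sets cardinality.
Set Implicit Arguments. Unset Strict Implicit. Unset Printing Implicit Defensive.
Import GRing.Theory.
Local Open Scope ring_scope.
Local Open Scope classical_set_scope.

(* The k-algebra k[T]/(m) is modelled by its canonical representatives:
   polynomials of size < size m (degree < deg m), with the k-vector space
   operations of {poly k} and multiplication (p, q) |-> (p * q) %% m,
   unit 1 %% m. *)
Definition quot_subalgebra (k : fieldType) (m : {poly k}) (S : set {poly k}) : Prop :=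
  [/\ S `<=` [set p | (size p < size m)%N],
      S (1 %% m),
      (forall p q, S p -> S q -> S (p + q)),
      (forall (c : k) p, S p -> S (c *: p)) &
      (forall p q, S p -> S q -> S ((p * q) %% m))].

From HB Require Import structures.
From mathcomp Require Import all_boot all_order all_algebra.
From mathcomp Require Import boolp classical_sets cardinality.
From mathcomp Require Import zify ring.
Import GRing.Theory.
Local Open Scope ring_scope.
Local Open Scope classical_set_scope.

(* If [w] has degree less than [m] and [m] divides [w ^ 2], then [w] is
   square-zero in k[T]/(m), so the span of 1 and [w] is a subalgebra.  For
   [m = P ^ n] the elements [w_a = P ^ (n - 2) * (T - a)] qualify, because
   [2 (n - 2) >= n] exactly when [n >= 4].  Distinct [a] give distinct
   subalgebras: [w_a = c + e w_b] forces [c = 0] (else the non-constant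
   [P ^ (n - 2)] would divide [c]), hence [T - a = e (T - b)] and [a = b]. *)

Section SquareZeroSpan.
Variable k : fieldType.

Definition span_one (w : {poly k}) : set {poly k} :=
  [set p | exists c e, p = c%:P + e *: w].

Lemma span_one_quot_subalgebra (m w : {poly k}) :
  (1 < size m)%N -> (size w < size m)%N -> m %| w * w ->
  quot_subalgebra m (span_one w).
Proof.
move=> m_gt1 w_lt m_dvd_ww.
have size_span (c e : k) : (size (c%:P + e *: w)%R < size m)%N.
  apply: leq_ltn_trans (size_polyD _ _) _; rewrite gtn_max.
  by rewrite (leq_ltn_trans (size_polyC_leq1 c)) ?(leq_ltn_trans (size_scale_leq _ _)).
split.
- by move=> _ [c [e ->]]; exact: size_span.
- by exists 1, 0; rewrite scale0r addr0 modp_small // size_polyC oner_neq0.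
- move=> p q [c1 [e1 ->]] [c2 [e2 ->]]; exists (c1 + c2), (e1 + e2).
  by rewrite polyCD scalerDl addrACA.
- move=> c p [c1 [e1 ->]]; exists (c * c1), (c * e1).
  by rewrite scalerDr scalerA polyCM mul_polyC.
- move=> p q [c1 [e1 ->]] [c2 [e2 ->]].
  have [r ww_eq] := dvdpP _ _ m_dvd_ww.
  exists (c1 * c2), (c1 * e2 + c2 * e1).
  have -> : (c1%:P + e1 *: w) * (c2%:P + e2 *: w) =
      ((c1 * c2)%:P + (c1 * e2 + c2 * e1) *: w) + (e1 * e2) *: (r * m).
    by rewrite -ww_eq -!mul_polyC !polyCD !polyCM; ring.
  by rewrite modpD modpZl modp_mull scaler0 addr0 modp_small.
Qed.

Lemma span_one_mulXsubC_inj (Q : {poly k}) :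
  (1 < size Q)%N -> injective (fun a => span_one (Q * ('X - a%:P))).
Proof.
move=> Q_gt1 a b /= span_ab.
have : span_one (Q * ('X - b%:P)) (Q * ('X - a%:P)).
  by rewrite -span_ab; exists 0, 1; rewrite scale1r add0r.
move=> [c [e wa_eq]].
set R := ('X - a%:P) - e *: ('X - b%:P).
have QR_eq : Q * R = c%:P by rewrite mulrBr -scalerAr wa_eq addrK.
have R0 : R = 0.
  apply: contraTeq (size_polyC_leq1 c) => R_neq0; rewrite -QR_eq -ltnNge.
  rewrite size_mul ?R_neq0 -?size_poly_gt0 ?(ltn_trans _ Q_gt1) //.
  by rewrite -subn1 -addnBA ?size_poly_gt0 // ltn_addr.
move/eqP: R0; rewrite subr_eq0 => /eqP /(congr1 (horner^~ b)).
by rewrite hornerZ !hornerXsubC subrr mulr0 => /eqP; rewrite subr_eq0 => /eqP.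
Qed.

Lemma size_exp_gt1 (P : {poly k}) j :
  (1 < size P)%N -> (0 < j)%N -> (1 < size (P ^+ j))%N.
Proof.
move=> P_gt1 j_gt0; move: P_gt1 (size_exp P j).
case: (size P) => // p; case: (size (P ^+ j)) => [|s] /=; nia.
Qed.

Lemma size_exp_mulXsubC_lt (P : {poly k}) i j (a : k) :
  (1 < size P)%N -> (i.+1 < j)%N ->
  (size (P ^+ i * ('X - a%:P))%R < size (P ^+ j))%N.
Proof.
move=> P_gt1 lt_ij.
have P_neq0 : P != 0 by rewrite -size_poly_gt0 (ltn_trans _ P_gt1).
rewrite size_Mmonic ?monicXsubC ?expf_neq0 // size_XsubC addn2 /=.
have Pi_gt0 : (0 < size (P ^+ i))%N by rewrite size_poly_gt0 expf_neq0.
have Pj_gt0 : (0 < size (P ^+ j))%N by rewrite size_poly_gt0 expf_neq0.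
move: P_gt1 Pi_gt0 Pj_gt0 (size_exp P i) (size_exp P j).
case: (size P) => // p; case: (size (P ^+ i)) => // si.
case: (size (P ^+ j)) => // sj /=; nia.
Qed.

End SquareZeroSpan.

Arguments span_one {k}.

Theorem lemma3p5 (k : fieldType) (hk : infinite_set [set: k])
  (n : nat) (P : {poly k}) :
  (4 <= n)%N -> (1 < size P)%N ->
  infinite_set [set S : set {poly k} | quot_subalgebra (P ^+ n) S].
Proof.
move=> n_ge4 P_gt1.
pose span_w a := span_one (P ^+ (n - 2) * ('X - a%:P)).
have span_w_subalg a : quot_subalgebra (P ^+ n) (span_w a).
  apply: span_one_quot_subalgebra.
  - by rewrite size_exp_gt1 //; lia.
  - by rewrite size_exp_mulXsubC_lt //; lia.
  - by rewrite mulrACA -exprD dvdp_mulr // dvdp_exp2l //; lia.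
have span_w_inj : injective span_w.
  by apply: span_one_mulXsubC_inj; rewrite size_exp_gt1 //; lia.
move=> fin_subalg; apply: hk.
have <- : span_w @^-1` [set S | quot_subalgebra (P ^+ n) S] = [set: k].
  by apply/seteqP; split => // a _; exact: span_w_subalg.
by apply: finite_preimage fin_subalg => a b _ _; exact: span_w_inj.
Qed.
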